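(* Let $a_1,a_2\ge0$ and $D=D_{a_1,a_2}$. (a) For every horizontal grading $S_1:D_1\to\mathbb{Z}_{\ge0}$ there exist subsets $R\subset Sh\subset D_2$ such that: (i) a vertical grading $S_2:D_2\to\mathbb{Z}_{\ge0}$ forms a compatible pair with $S_1$ if and only if $S_2(v)=0$ for all $v\in Sh\setminus R$ and, for each $h\in\operatorname{supp}(S_1)$ and $v\in R$, at least one of the conditions (HGC), (VGC) holds for $h,v$; (ii) $|Sh|=\min(a_2,|S_1|)$. (b) For every vertical grading $S_2:D_2\to\mathbb{Z}_{\ge0}$ there exist subsets $R\subset Sh\subset D_1$ such that: (i) a horizontal grading $S_1:D_1\to\mathbb{Z}_{\ge0}$ forms a compatible pair with $S_2$ if and only if $S_1(h)=0$ for all $h\in Sh\setminus R$ and, for each $h\in R$ and $v\in\operatorname{supp}(S_2)$, at least one of the conditions (HGC), (VGC) holds for $h,v$; (ii) $|Sh|=\min(a_1,|S_2|)$.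
   Context: Maximal Dyck path: $D=D_{a_1,a_2}$ is the lattice path of unit East and North steps from $(0,0)$ to $(a_1,a_2)$ staying weakly below the diagonal of $[0,a_1]\times[0,a_2]$ and closest to it. $D_1$ and $D_2$ are its sets of horizontal and vertical edges. Identify $(0,0)\equiv(a_1,a_2)$ so $D$ is a cyclic sequence of edges; for edges $e,e'$, $ee'$ is the subpath from $e$ to $e'$ inclusive following $D$ cyclically (wrapping through $(0,0)$ if necessary), $ee$ is $e$ alone, and $(ee')_1,(ee')_2$ are its horizontal and vertical edges. For gradings $S_1:D_1\to\mathbb{Z}_{\ge0}$, $S_2:D_2\to\mathbb{Z}_{\ge0}$, $h\in D_1$, $v\in D_2$: condition (HGC) holds for $h,v$ if there is an edge $e$ with $he$ a proper subpath of $hv$ and $|(he)_2|=\sum_{h'\in(he)_1}S_1(h')$; condition (VGC) holds if there is an edge $e$ with $ev$ a proper subpath of $hv$ and $|(ev)_1|=\sum_{v'\in(ev)_2}S_2(v')$. $(S_1,S_2)$ is a compatible pair if for every $h\in D_1$, $v\in D_2$ at least one of (HGC), (VGC) holds. $|S_i|$ is the sum of the values of $S_i$; $\operatorname{supp}$ denotes the set of edges with nonzero value. *)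

From mathcomp Require Import all_boot.
Set Implicit Arguments. Unset Strict Implicit. Unset Printing Implicit Defensive.

(* The maximal Dyck path D_{a1,a2} as a word of steps: true = East (horizontal),
   false = North (vertical).  Edges are indexed by 'I_(a1+a2) in path order, starting at (0,0). *)
Definition dyck_word (a1 a2 : nat) : seq bool :=
  if a1 == 0 then nseq a2 false
  else flatten [seq true :: nseq (i * a2 %/ a1 - i.-1 * a2 %/ a1) false | i <- iota 1 a1].

Definition is_horiz (a1 a2 : nat) (e : 'I_(a1 + a2)) : bool := nth false (dyck_word a1 a2) e.

Definition D1 (a1 a2 : nat) : {set 'I_(a1 + a2)} := [set e | is_horiz e].
Definition D2 (a1 a2 : nat) : {set 'I_(a1 + a2)} := [set e | ~~ is_horiz e].

(* cyclic distance from e to f along D (with (0,0) identified with (a1,a2)) *)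
Definition cdist (n : nat) (e f : 'I_n) : nat := (f + n - e) %% n.

Definition subpath (n : nat) (e e' : 'I_n) : {set 'I_n} :=
  [set f | cdist e f <= cdist e e'].

Definition hgrading (a1 a2 : nat) (S1 : 'I_(a1 + a2) -> nat) : Prop :=
  forall e, e \notin D1 a1 a2 -> S1 e = 0.
Definition vgrading (a1 a2 : nat) (S2 : 'I_(a1 + a2) -> nat) : Prop :=
  forall e, e \notin D2 a1 a2 -> S2 e = 0.

Definition HGC (a1 a2 : nat) (S1 : 'I_(a1 + a2) -> nat) (h v : 'I_(a1 + a2)) : Prop :=
  exists e, subpath h e \proper subpath h v /\
    #|subpath h e :&: D2 a1 a2| = \sum_(h' in subpath h e :&: D1 a1 a2) S1 h'.

Definition VGC (a1 a2 : nat) (S2 : 'I_(a1 + a2) -> nat) (h v : 'I_(a1 + a2)) : Prop :=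
  exists e, subpath e v \proper subpath h v /\
    #|subpath e v :&: D1 a1 a2| = \sum_(v' in subpath e v :&: D2 a1 a2) S2 v'.

Definition compatible (a1 a2 : nat) (S1 S2 : 'I_(a1 + a2) -> nat) : Prop :=
  forall h v, h \in D1 a1 a2 -> v \in D2 a1 a2 -> HGC S1 h v \/ VGC S2 h v.

Definition gsum (a1 a2 : nat) (A : {set 'I_(a1 + a2)}) (S : 'I_(a1 + a2) -> nat) : nat :=
  \sum_(e in A) S e.

From mathcomp Require Import all_boot zify.
Set Implicit Arguments. Unset Strict Implicit. Unset Printing Implicit Defensive.

(* Fix S1 and walk backwards around the cycle from a vertical edge v, comparing
   the number of vertical edges passed with the S1-weight of the horizontal
   edges passed.  If the weight never overtakes the count, then for every
   horizontal h a discrete intermediate value argument on the subpaths h e of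
   h v finds one with equal count and weight, i.e. (HGC) holds.  The remaining
   "overweight" edges v are few: charge v to the unit of S1-weight, on the edge
   where its walk first overdraws, that corresponds to the amount of the
   overdraft.  Two edges charged alike would have nested walks, and the outer
   one would overdraw by strictly less, so the charging is injective and there
   are at most |S1| overweight edges.  Any set of min(a2, |S1|) vertical edges
   containing them serves as Sh = R.  Part (b) is the mirror image of (a):
   reversing the cycle exchanges (HGC) and (VGC). *)

Lemma modn_lt2n x n : x < n + n -> x %% n = (if x < n then x else x - n).
Proof.
case: (ltnP x n) => [/modn_small //|le_nx lt_x2n].
by rewrite -{1}(subnK le_nx) modnDr modn_small // ltn_subLR.
Qed.

Lemma exists_suffix_sum_eq (a b : nat -> nat) l K :
    l <= K -> (forall j, a j <= 1) -> a K <= b K ->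
    \sum_(l <= j < K.+1) b j <= \sum_(l <= j < K.+1) a j ->
  exists2 m, l <= m <= K & \sum_(m <= j < K.+1) a j = \sum_(m <= j < K.+1) b j.
Proof.
move=> le_lK a_le1 le_abK le_ba.
pose Q m := (l <= m <= K) && (\sum_(m <= j < K.+1) b j <= \sum_(m <= j < K.+1) a j).
have exQ : exists m, Q m by exists l; rewrite /Q leqnn le_lK le_ba.
have boundQ m : Q m -> m <= K by case/andP=> /andP[].
case: (ex_maxnP exQ boundQ) => m /andP[/andP[le_lm le_mK] le_bam] max_m.
exists m; rewrite ?le_lm //.
case: (ltnP m K) => [lt_mK|le_Km].
  have lt_ab : \sum_(m.+1 <= j < K.+1) a j < \sum_(m.+1 <= j < K.+1) b j.
    rewrite ltnNge; apply/negP => le_ba1.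
    by have := max_m m.+1; rewrite /Q le_ba1 lt_mK leqW //= ltnn => /(_ isT).
  have split_m (F : nat -> nat) : \sum_(m <= j < K.+1) F j = F m + \sum_(m.+1 <= j < K.+1) F j.
    by rewrite big_ltn // ltnS ltnW.
  by move: le_bam; rewrite !split_m; have := a_le1 m; lia.
have eq_mK : m = K by apply/eqP; rewrite eqn_leq le_mK.
by move: le_bam; rewrite eq_mK !big_nat1; lia.
Qed.

Lemma card_under_graph (T : finType) M (f : T -> nat) : (forall x, f x <= M) ->
  #|[set p : T * 'I_M | p.2 < f p.1]| = \sum_x f x.
Proof.
move=> f_le; rewrite -sum1dep_card big_mkcond /=.
rewrite -(pair_bigA _ (fun x (j : 'I_M) => if j < f x then 1 else 0)).
apply: eq_bigr => x _; rewrite -big_mkcond /= -(big_ord_widen _ (fun=> 1)) //.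
by rewrite sum1_card card_ord.
Qed.

Lemma exists_intermediate_set (T : finType) (A B : {set T}) m :
  A \subset B -> #|A| <= m <= #|B| -> exists C : {set T}, [/\ A \subset C, C \subset B & #|C| = m].
Proof.
move=> sAB /andP[le_Am le_mB].
pose X := [set x in take (m - #|A|) (enum (B :\: A))].
have cardX : #|X| = m - #|A|.
  rewrite cardsE (card_uniqP _) ?take_uniq ?enum_uniq // size_take -cardE cardsD.
  by rewrite (setIidPr sAB); case: ltnP; lia.
have sXB : X \subset B :\: A.
  by apply/subsetP => x; rewrite inE => /mem_take; rewrite mem_enum.
exists (A :|: X); split; first exact: subsetUl.
  by rewrite subUset sAB (subset_trans sXB) ?subsetDl.
rewrite cardsU cardX (_ : A :&: X = set0) ?cards0; first lia.
by apply/setP => x; rewrite !inE; apply/negP => /andP[xA /mem_take]; rewrite mem_enum !inE xA.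
Qed.

Lemma card_setI_sum (T : finType) (A B : {set T}) : #|A :&: B| = \sum_(x in A) (x \in B : nat).
Proof.
rewrite -sum1_card big_mkcond [RHS]big_mkcond; apply: eq_bigr => x _.
by rewrite inE; case: (x \in A); case: (x \in B).
Qed.

Lemma sum_setIC0 (T : finType) (A B : {set T}) (F : T -> nat) :
  (forall x, x \in B -> F x = 0) -> \sum_(x in A :&: ~: B) F x = \sum_(x in A) F x.
Proof.
move=> F0; rewrite big_mkcond [RHS]big_mkcond; apply: eq_bigr => x _.
by rewrite !inE; case: (boolP (x \in B)) => [/F0 ->|]; case: (x \in A).
Qed.

Lemma proper_preimset_invol (T : finType) (g : T -> T) (A B : {set T}) :
  involutive g -> g @^-1: A \proper g @^-1: B -> A \proper B.
Proof.
move=> gK; have g_inj := inv_inj gK.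
rewrite !properEcard !card_preimset // => /andP[/subsetP sAB ->].
rewrite andbT; apply/subsetP => x xA.
by have := sAB (g x); rewrite !inE gK => /(_ xA).
Qed.

Lemma card_nth n (w : seq bool) : size w = n -> #|[set i : 'I_n | nth false w i]| = count id w.
Proof.
move=> size_w; rewrite -sum1dep_card -sum1_count -{2}(mkseq_nth false w) size_w /mkseq big_map.
by rewrite (_ : iota 0 n = index_iota 0 n) ?big_mkord // /index_iota subn0.
Qed.

Section Cycle.

Variable n : nat.
Implicit Types e f h v x : 'I_n.

Lemma ord_gt0 x : 0 < n.
Proof. exact: leq_ltn_trans (leq0n x) (ltn_ord x). Qed.

(* Truncated subtraction makes [back v j] meaningful only for [j <= n]. *)
Definition back v (j : nat) : 'I_n := Ordinal (ltn_pmod (v + n - j) (ord_gt0 v)).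

Lemma cdistE e f : cdist e f = (if e <= f then f - e else f + n - e).
Proof.
have := ltn_ord e; have := ltn_ord f => ltf lte.
by rewrite /cdist modn_lt2n; [repeat case: ifP; lia | lia].
Qed.

Lemma cdist_lt e f : cdist e f < n.
Proof. exact: ltn_pmod (ord_gt0 e). Qed.

Lemma backE v j : j <= n -> back v j = (if j <= v then v - j else v + n - j) :> nat.
Proof.
have := ltn_ord v => ltv le_jn.
by rewrite /= modn_lt2n; [repeat case: ifP; lia | lia].
Qed.

Lemma back0 v : back v 0 = v.
Proof. by apply: ord_inj; rewrite backE //= subn0. Qed.

Lemma back_back v m j : m + j <= n -> back (back v m) j = back v (m + j).
Proof.
move=> le_mjn; have := ltn_ord v => ltv; apply: ord_inj.
rewrite !backE ?(backE v) //; try lia; repeat case: ifP; lia.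
Qed.

Lemma back_inj j : j <= n -> injective (back^~ j).
Proof.
move=> le_jn v w /(congr1 (@nat_of_ord n)); rewrite !backE //.
have := ltn_ord v; have := ltn_ord w => ltw ltv eq_vw; apply: ord_inj.
by move: eq_vw; repeat case: ifP; lia.
Qed.

Lemma cdist_back v j : j < n -> cdist (back v j) v = j.
Proof.
move=> lt_jn; have := ltn_ord v => ltv.
by rewrite cdistE backE ?(ltnW lt_jn) //; repeat case: ifP; lia.
Qed.

Lemma back_cdist e v : back v (cdist e v) = e.
Proof.
have := ltn_ord e; have := ltn_ord v => ltv lte; apply: ord_inj.
rewrite backE ?(ltnW (cdist_lt e v)) // cdistE; repeat case: ifP; lia.
Qed.

Lemma cdist_to_back h v m : m <= cdist h v -> cdist h (back v m) = cdist h v - m.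
Proof.
move=> le_mK; have := cdist_lt h v => ltKn.
have def_h : h = back (back v m) (cdist h v - m) by rewrite back_back subnKC ?back_cdist //; lia.
by rewrite {1}def_h cdist_back //; lia.
Qed.

Lemma cdist_rev e f : cdist (rev_ord f) (rev_ord e) = cdist e f.
Proof.
have := ltn_ord e; have := ltn_ord f => ltf lte.
by rewrite !cdistE /=; repeat case: ifP; lia.
Qed.

Lemma subpathE e v x : (x \in subpath e v) = (cdist x v <= cdist e v).
Proof.
have := ltn_ord e; have := ltn_ord v; have := ltn_ord x => ltx ltv lte.
by rewrite inE !cdistE; repeat case: ifP; lia.
Qed.

Lemma sum_subpath e v (F : 'I_n -> nat) :
  \sum_(x in subpath e v) F x = \sum_(0 <= j < (cdist e v).+1) F (back v j).
Proof.
have back_bij : bijective (fun j : 'I_n => back v j).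
  exists (fun x => Ordinal (cdist_lt x v)) => [j|x]; last exact: back_cdist.
  by apply: ord_inj; rewrite /= cdist_back.
rewrite (reindex _ (onW_bij _ back_bij)) big_mkord.
rewrite (big_ord_widen n (fun j => F (back v j))) ?cdist_lt //.
by apply: eq_bigl => j; rewrite subpathE cdist_back.
Qed.

Lemma subpath_rev e f : subpath (rev_ord f) (rev_ord e) = @rev_ord n @^-1: subpath e f.
Proof.
by apply/setP => x; rewrite [RHS]inE subpathE inE -[x in cdist _ x]rev_ordK !cdist_rev.
Qed.

Definition walk_sum (F : 'I_n -> nat) v k := \sum_(1 <= j < k.+1) F (back v j).

Lemma walk_sum_add F v m k :
  m + k <= n -> walk_sum F v (m + k) = walk_sum F v m + walk_sum F (back v m) k.
Proof.
move=> le_mkn; rewrite /walk_sum (big_cat_nat (n := m.+1)) //=; last by rewrite ltnS leq_addr.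
congr (_ + _); rewrite -(add1n m) big_addn (_ : _ - m = k.+1); last lia.
by apply: eq_big_nat => j /andP[_ ltjk]; rewrite back_back addnC //; lia.
Qed.

Lemma walk_sumS F v k : walk_sum F v k.+1 = walk_sum F v k + F (back v k.+1).
Proof. by rewrite /walk_sum big_nat_recr. Qed.

End Cycle.

Section Balance.

Variables (n : nat) (P : {set 'I_n}) (tok : 'I_n -> nat).
Implicit Types e h v w x : 'I_n.

(* With P := D2 and tok := S1 this is (HGC); with P := D1 and tok := S2,
   [balanced_suffix] is (VGC). *)
Definition balanced_prefix h v := exists e,
  subpath h e \proper subpath h v /\ #|subpath h e :&: P| = \sum_(x in subpath h e :&: ~: P) tok x.

Definition balanced_suffix h v := exists e,
  subpath e v \proper subpath h v /\ #|subpath e v :&: P| = \sum_(x in subpath e v :&: ~: P) tok x.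

Local Notation marks := (walk_sum (fun x => (x \in P : nat))).

Definition overdraft v k := (0 < k) && (marks v k < walk_sum tok v k).

Definition overweight := [set v in P | [exists k : 'I_n, overdraft v k]].

Hypothesis tok0 : forall x, x \in P -> tok x = 0.

Lemma sum_subpath_back h v m (F : 'I_n -> nat) : m <= cdist h v ->
  \sum_(x in subpath h (back v m)) F x = \sum_(m <= j < (cdist h v).+1) F (back v j).
Proof.
move=> le_mK; have := cdist_lt h v => ltKn.
rewrite sum_subpath cdist_to_back // [in RHS](_ : m = 0 + m) // big_addn subSn //.
by apply: eq_big_nat => j /andP[_ ltj]; rewrite back_back 1?addnC //; lia.
Qed.

Lemma balanced_prefix_of_suffix h v m : 0 < m <= cdist h v ->
    \sum_(m <= j < (cdist h v).+1) (back v j \in P : nat) =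
    \sum_(m <= j < (cdist h v).+1) tok (back v j) ->
  balanced_prefix h v.
Proof.
move=> /andP[m_gt0 le_mK] eq_sums; exists (back v m).
have cdist_hm : cdist h (back v m) < cdist h v by rewrite cdist_to_back // ltn_subrL m_gt0; lia.
split; last by rewrite card_setI_sum sum_setIC0 // !sum_subpath_back.
apply/properP; split; first by apply/subsetP => x; rewrite !inE => /leq_trans; apply; exact: ltnW.
by exists v; rewrite !inE // -ltnNge.
Qed.

Lemma balanced_prefixP h v : h \notin P -> v \in P ->
  balanced_prefix h v \/ (tok h != 0 /\ v \in overweight).
Proof.
move=> hNP vP; set K := cdist h v; have ltKn : K < n := cdist_lt h v.
have K_gt0 : 0 < K.
  by rewrite lt0n; apply: contraNneq hNP => K0; rewrite -(back_cdist h v) -/K K0 back0.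
have sum_at_h (F : 'I_n -> nat) : \sum_(K <= j < K.+1) F (back v j) = F h.
  by rewrite big_nat1 back_cdist.
case: (eqVneq (tok h) 0) => [tokh0|tokh].
  left; apply: (balanced_prefix_of_suffix (m := K)); first by rewrite K_gt0 leqnn.
  by rewrite -/K (sum_at_h (fun x => (x \in P : nat))) sum_at_h tokh0 (negbTE hNP).
case: (boolP (v \in overweight)) => [vow|vNow]; [by right | left].
have le_wt_marks : walk_sum tok v K <= marks v K.
  move: vNow; rewrite inE vP /= => /existsPn/(_ (Ordinal ltKn)).
  by rewrite /overdraft /= K_gt0 -leqNgt.
have [|m le_1mK eq_sums] :=
  exists_suffix_sum_eq K_gt0 (fun j => leq_b1 (back v j \in P)) _ le_wt_marks.
  by rewrite back_cdist (negbTE hNP).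
exact: balanced_prefix_of_suffix le_1mK eq_sums.
Qed.

Definition first_overdraft v := find (overdraft v) (iota 0 n).

Definition excess v := walk_sum tok v (first_overdraft v) - marks v (first_overdraft v).

Lemma first_overdraftP v (k := first_overdraft v) : v \in overweight ->
  [/\ 0 < k < n, marks v k < walk_sum tok v k
    & forall j, j < k -> walk_sum tok v j <= marks v j].
Proof.
rewrite inE => /andP[_ /existsP[k0 ov_k0]].
have has_ov : has (overdraft v) (iota 0 n).
  by apply/hasP; exists (val k0); rewrite // mem_iota add0n ltn_ord.
have lt_kn : k < n by move: has_ov; rewrite has_find size_iota.
have := nth_find 0 has_ov; rewrite -/k nth_iota // add0n => /andP[k_gt0 ov_k].
split=> [|//|j lt_jk]; first by rewrite k_gt0.
have := before_find 0 lt_jk; rewrite nth_iota ?add0n; last exact: ltn_trans lt_kn.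
case: (posnP j) => [->|j_gt0]; first by rewrite /walk_sum !big_geq.
by rewrite /overdraft j_gt0 /= => /negbT; rewrite -leqNgt.
Qed.

Lemma excess_bounds v : v \in overweight ->
  0 < excess v <= tok (back v (first_overdraft v)).
Proof.
case/first_overdraftP; rewrite /excess; set k := first_overdraft v.
case: k => [//|k] _ lt_marks_wt /(_ k (ltnSn k)).
by move: lt_marks_wt; rewrite !walk_sumS; case: (_ \in P); lia.
Qed.

Lemma excess_lt v w m : v \in overweight -> w \in overweight -> v = back w m -> 0 < m ->
  m + first_overdraft v = first_overdraft w -> excess w < excess v.
Proof.
move=> ov_v ov_w def_v m_gt0 def_kw.
have [/andP[_ lt_kwn] _ min_w] := first_overdraftP ov_w.
have [_ lt_v _] := first_overdraftP ov_v.
have vP : v \in P by move: ov_v; rewrite inE => /andP[].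
(* The m-th step of the walk back from w is the marked, token-free edge v. *)
have lt_wt_marks : walk_sum tok w m < marks w m.
  case: m m_gt0 def_v def_kw => [//|p] _ def_v def_kw.
  have := min_w p; rewrite -def_kw addSn ltnS leq_addr => /(_ isT).
  by rewrite !walk_sumS -def_v vP tok0 //; lia.
have le_kwn : m + first_overdraft v <= n by rewrite def_kw ltnW.
by rewrite /excess -def_kw !walk_sum_add // -def_v; lia.
Qed.

Lemma overweight_slot_inj v w : v \in overweight -> w \in overweight ->
  back v (first_overdraft v) = back w (first_overdraft w) -> excess v = excess w -> v = w.
Proof.
wlog le_k : v w / first_overdraft v <= first_overdraft w.
  move=> wlog_le ov_v ov_w eq_back eq_exc.
  case: (leqP (first_overdraft v) (first_overdraft w)) => [|/ltnW] le.
    exact: wlog_le.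
  by symmetry; apply: wlog_le.
move=> ov_v ov_w eq_back eq_exc.
have [/andP[_ lt_kv] _ _] := first_overdraftP ov_v.
have [/andP[_ lt_kw] _ _] := first_overdraftP ov_w.
set m := first_overdraft w - first_overdraft v.
have def_v : v = back w m.
  by apply: (back_inj (ltnW lt_kv)); rewrite /= back_back subnK // ltnW.
case: (posnP m) => [m0|m_gt0]; first by rewrite def_v m0 back0.
by have := excess_lt ov_v ov_w def_v m_gt0 (subnK le_k); rewrite eq_exc ltnn.
Qed.

Lemma card_overweight : #|overweight| <= \sum_x tok x.
Proof.
set tot := \sum_x tok x.
have tok_le x : tok x <= tot by rewrite /tot (bigD1 x) //= leq_addr.
have excess_le v : v \in overweight -> 0 < excess v <= tot.
  by case/excess_bounds/andP=> -> /leq_trans; apply.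
pose slot v : 'I_n * 'I_tot.+1 := (back v (first_overdraft v), inord (excess v).-1).
have slot_inj : {in overweight &, injective slot}.
  move=> v w ov_v ov_w eq_slot; have eq_back := congr1 fst eq_slot.
  have := excess_le v ov_v; have := excess_le w ov_w => le_w le_v.
  move: (congr1 (@nat_of_ord _ \o snd) eq_slot) => /=; rewrite !inordK; try lia.
  by move=> eq_exc; apply: overweight_slot_inj => //; lia.
apply: leq_trans (eq_leq (card_under_graph (M := tot.+1) (fun x => leqW (tok_le x)))).
rewrite -(card_in_imset slot_inj).
apply: subset_leq_card; apply/subsetP => _ /imsetP[v ov_v ->].
have := excess_bounds ov_v; have := excess_le v ov_v => le_tot bounds.
by rewrite inE /= inordK; lia.
Qed.

Lemma balanced_prefix_shadow : exists C : {set 'I_n},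
  [/\ C \subset P, #|C| = minn #|P| (\sum_x tok x)
    & forall h v, h \notin P -> v \in P -> balanced_prefix h v \/ (tok h != 0 /\ v \in C)].
Proof.
have owP : overweight \subset P by apply/subsetP => v; rewrite inE => /andP[].
have [|C [owC CP cardC]] := exists_intermediate_set (m := minn #|P| (\sum_x tok x)) owP.
  by rewrite leq_min subset_leq_card // card_overweight geq_minl.
exists C; split=> // h v hNP vP.
by case: (balanced_prefixP hNP vP) => [|[tokh ow_v]]; [left | right; rewrite tokh (subsetP owC)].
Qed.

End Balance.

Lemma balanced_suffix_rev n (P : {set 'I_n}) (tok : 'I_n -> nat) (h v : 'I_n) :
  balanced_prefix (@rev_ord n @^-1: P) (tok \o @rev_ord n) (rev_ord v) (rev_ord h) ->
  balanced_suffix P tok h v.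
Proof.
case=> e'; rewrite -(rev_ordK e'); move: (rev_ord e') => e.
rewrite !subpath_rev -!preimsetI -preimsetC -preimsetI card_preimset; last exact: rev_ord_inj.
case=> /(proper_preimset_invol (@rev_ordK n)) sub_ev bal; exists e; split=> //.
by rewrite bal [RHS](reindex_inj rev_ord_inj); apply: eq_bigl => x; rewrite inE.
Qed.

Section DyckPath.

Variables a1 a2 : nat.

Lemma count_dyck_word : count id (dyck_word a1 a2) = a1.
Proof.
rewrite /dyck_word; case: eqP => [->|_]; first by rewrite count_nseq mul0n.
rewrite count_flatten -map_comp (eq_map (g := fun=> 1)) => [|i /=]; last by rewrite count_nseq.
by rewrite sumnE big_map sum1_size size_iota.
Qed.

Lemma size_dyck_word : size (dyck_word a1 a2) = a1 + a2.
Proof.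
rewrite /dyck_word; case: eqP => [->|/eqP a1_neq0]; first by rewrite size_nseq.
set f := fun i => i * a2 %/ a1.
have f_homo : {homo f : i j / i <= j}.
  by move=> i j le_ij; rewrite leq_div2r // leq_mul2r le_ij orbT.
rewrite size_flatten /shape -map_comp sumnE big_map (_ : iota 1 a1 = index_iota 1 a1.+1).
  rewrite (eq_bigr (fun i => 1 + (f i - f i.-1))) => [|i _]; last by rewrite /= size_nseq.
  rewrite big_split /= sum_nat_const_nat big_add1 /= (telescope_sumn _ _ f_homo).
  by rewrite /f mulKn ?lt0n // mul0n div0n subn0 subn1 muln1.
by rewrite /index_iota subn1.
Qed.

Lemma card_D1 : #|D1 a1 a2| = a1.
Proof. by rewrite card_nth ?size_dyck_word ?count_dyck_word. Qed.

Lemma setC_D1 : ~: D1 a1 a2 = D2 a1 a2.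
Proof. by apply/setP => x; rewrite !inE. Qed.

Lemma setC_D2 : ~: D2 a1 a2 = D1 a1 a2.
Proof. by rewrite -setC_D1 setCK. Qed.

Lemma card_D2 : #|D2 a1 a2| = a2.
Proof. by have := cardsC (D1 a1 a2); rewrite setC_D1 card_D1 card_ord => /addnI. Qed.

Lemma in_D2 x : (x \in D2 a1 a2) = (x \notin D1 a1 a2).
Proof. by rewrite !inE. Qed.

Lemma gsum_grading (A : {set 'I_(a1 + a2)}) (S : 'I_(a1 + a2) -> nat) :
  (forall x, x \notin A -> S x = 0) -> gsum A S = \sum_x S x.
Proof.
move=> S0; rewrite /gsum big_mkcond; apply: eq_bigr => x _.
by case: ifPn => // /S0.
Qed.

Lemma vertical_shadow :
  forall S1 : 'I_(a1 + a2) -> nat, hgrading S1 ->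
     exists R Sh : {set 'I_(a1 + a2)},
       [/\ R \subset Sh, Sh \subset D2 a1 a2,
           (forall S2 : 'I_(a1 + a2) -> nat, vgrading S2 ->
              (compatible S1 S2 <->
               ((forall v, v \in Sh :\: R -> S2 v = 0) /\
                (forall h v, h \in D1 a1 a2 -> S1 h != 0 -> v \in R ->
                   HGC S1 h v \/ VGC S2 h v))))
         & #|Sh| = minn a2 (gsum (D1 a1 a2) S1)].
Proof.
move=> S1 hS1; have S1_D2 x : x \in D2 a1 a2 -> S1 x = 0 by rewrite in_D2; apply: hS1.
have [C [CD2 cardC balC]] := balanced_prefix_shadow S1_D2.
exists C, C; split=> //; last by rewrite cardC card_D2 gsum_grading.
move=> S2 _; split=> [compat | [_ balC_VGC] h v hD1 vD2].
  split=> [v|h v hD1 _ vC]; first by rewrite setDv inE.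
  exact: compat hD1 (subsetP CD2 v vC).
have hND2 : h \notin D2 a1 a2 by rewrite in_D2 hD1.
case: (balC h v hND2 vD2) => [bal|[S1h vC]]; last exact: balC_VGC.
by left; rewrite /HGC -setC_D2.
Qed.

Lemma horizontal_shadow :
  forall S2 : 'I_(a1 + a2) -> nat, vgrading S2 ->
     exists R Sh : {set 'I_(a1 + a2)},
       [/\ R \subset Sh, Sh \subset D1 a1 a2,
           (forall S1 : 'I_(a1 + a2) -> nat, hgrading S1 ->
              (compatible S1 S2 <->
               ((forall h, h \in Sh :\: R -> S1 h = 0) /\
                (forall h v, h \in R -> v \in D2 a1 a2 -> S2 v != 0 ->
                   HGC S1 h v \/ VGC S2 h v))))
         & #|Sh| = minn a1 (gsum (D2 a1 a2) S2)].
Proof.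
move=> S2 hS2; set P := @rev_ord _ @^-1: D1 a1 a2.
have S2_P x : x \in P -> (S2 \o @rev_ord _) x = 0.
  by rewrite inE => hD1; apply: hS2; rewrite in_D2 hD1.
have [C [CP cardC balC]] := balanced_prefix_shadow S2_P.
exists (@rev_ord _ @^-1: C), (@rev_ord _ @^-1: C); split=> //.
- by apply/subsetP => x; rewrite inE => /(subsetP CP); rewrite inE rev_ordK.
- move=> S1 _; split=> [compat | [_ balC_HGC] h v hD1 vD2].
    split=> [h|h v hC vD2 _]; first by rewrite setDv inE.
    by apply: compat vD2; move: hC; rewrite inE => /(subsetP CP); rewrite inE rev_ordK.
  have rvNP : rev_ord v \notin P by rewrite inE rev_ordK -in_D2.
  have rhP : rev_ord h \in P by rewrite inE rev_ordK.
  case: (balC _ _ rvNP rhP) => [bal|[S2v hC]].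
    by right; rewrite /VGC -setC_D1; apply: balanced_suffix_rev.
  by apply: balC_HGC => //; rewrite ?inE // -[v]rev_ordK.
- rewrite card_preimset ?cardC ?card_preimset; try exact: rev_ord_inj.
  by rewrite card_D1 gsum_grading // [in RHS](reindex_inj rev_ord_inj).
Qed.

End DyckPath.

Theorem lemma4p4 (a1 a2 : nat) :
  (forall S1 : 'I_(a1 + a2) -> nat, hgrading S1 ->
     exists R Sh : {set 'I_(a1 + a2)},
       [/\ R \subset Sh, Sh \subset D2 a1 a2,
           (forall S2 : 'I_(a1 + a2) -> nat, vgrading S2 ->
              (compatible S1 S2 <->
               ((forall v, v \in Sh :\: R -> S2 v = 0) /\
                (forall h v, h \in D1 a1 a2 -> S1 h != 0 -> v \in R ->
                   HGC S1 h v \/ VGC S2 h v))))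
         & #|Sh| = minn a2 (gsum (D1 a1 a2) S1)]) /\
  (forall S2 : 'I_(a1 + a2) -> nat, vgrading S2 ->
     exists R Sh : {set 'I_(a1 + a2)},
       [/\ R \subset Sh, Sh \subset D1 a1 a2,
           (forall S1 : 'I_(a1 + a2) -> nat, hgrading S1 ->
              (compatible S1 S2 <->
               ((forall h, h \in Sh :\: R -> S1 h = 0) /\
                (forall h v, h \in R -> v \in D2 a1 a2 -> S2 v != 0 ->
                   HGC S1 h v \/ VGC S2 h v))))
         & #|Sh| = minn a1 (gsum (D2 a1 a2) S2)]).
Proof. by split; [exact: vertical_shadow | exact: horizontal_shadow]. Qed.
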